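(* Let $P$ be a finite $(3+1)$-free poset and let $\mathsf a=a_na_{n-1}\cdots a_1$, $\mathsf b=b_nb_{n-1}\cdots b_1$ and $\mathsf v$ be words in the alphabet $P$ such that (i) the words $\mathsf a\mathsf v$ and $\mathsf b\mathsf v$ are $P$-strictly decreasing; (ii) $b_i\not<_Pa_i$ for all $i\in[n]$; (iii) $a_i<_Pb_{i+1}$ for all $i\in[n-1]$. Then $\mathbf{u}_{\mathsf a}\mathbf{u}_{\mathsf v}\mathbf{u}_{\mathsf b}\equiv\mathbf{u}_{\mathsf a}\mathbf{u}_{\mathsf b}\mathbf{u}_{\mathsf v}\pmod{I^P_{\mathrm{plac}}}$.
   Context: $a<_Pb$: strict order; $a\sim_Pb$: incomparable or equal. A word $w_1\cdots w_m$ is $P$-strictly decreasing if $w_1>_Pw_2>_P\cdots>_Pw_m$. $\mathcal{U}_P=\mathbb{Z}\langle u_a:a\in P\rangle$, $\mathbf{u}_w=u_{w_1}\cdots u_{w_m}$. $I^P_{\mathrm{plac}}$ is the two-sided ideal generated by: $u_bu_au_c-u_bu_cu_a$ when $a<_Pb$, $c\not<_Pb$, $a<_Pc$; $u_cu_au_b-u_au_cu_b$ when $b\not<_Pa$, $b<_Pc$, $a<_Pc$; $u_cu_au_b-u_bu_cu_a$ when $a\sim_Pb$, $b\sim_Pc$, $a<_Pc$. *)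

From mathcomp Require Import all_boot all_order all_algebra.
Set Implicit Arguments. Unset Strict Implicit. Unset Printing Implicit Defensive.
Import Order.TTheory.
Local Open Scope order_scope.

(* The free associative ring Z<u_a : a in P> has the words (seq P) as a
   Z-basis; u_w is the basis element of the word w.  An element of it is
   represented by its coefficient function (seq P -> int). *)

Section Defs.
Context {d : Order.disp_t} {P : finPOrderType d}.

Definition three_one_free : Prop :=
  forall x y z w : P, x < y -> y < z ->
    [|| w >=< x, w >=< y | w >=< z].

Definition simP (a b : P) : bool := (a == b) || ~~ (a >=< b).

Definition strict_decr (w : seq P) : bool := sorted (fun x y => y < x) w.

(* generators w - w' of I^P_plac, encoded as the pair (w, w') *)
Definition plac_gen (w w' : seq P) : Prop :=
  exists a b c : P,
    [/\ a < b, ~~ (c < b), a < c & (w = [:: b; a; c] /\ w' = [:: b; c; a])]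
 \/ [/\ ~~ (b < a), b < c, a < c & (w = [:: c; a; b] /\ w' = [:: a; c; b])]
 \/ [/\ simP a b, simP b c, a < c & (w = [:: c; a; b] /\ w' = [:: b; c; a])].

(* f (given by its coefficients) lies in the two-sided ideal I^P_plac:
   it is a finite Z-combination of u_l (u_g - u_g') u_r with (g,g') a generator *)
Definition in_Iplac (f : seq P -> int) : Prop :=
  exists s : seq (int * seq P * seq P * seq P * seq P),
    (forall t, t \in s -> plac_gen t.1.1.2 t.1.2) /\
    forall w : seq P,
      f w = (\sum_(t <- s)
               t.1.1.1.1 * (((w == t.1.1.1.2 ++ t.1.1.2 ++ t.2) : int)
                            - ((w == t.1.1.1.2 ++ t.1.2 ++ t.2) : int)))%R.

Definition plac_congr (w1 w2 : seq P) : Prop :=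
  in_Iplac (fun w => (((w == w1) : int) - ((w == w2) : int))%R).

End Defs.

(* Write a = a' a_1 and b = b' b_1.
   Since a_1 < b_2, the word b' a_1 v is strictly decreasing, so induction on n
   with a_1 v in place of v rewrites a' a_1 v b' b_1 into a' b' a_1 v b_1.  The
   relation then carries b_1 leftwards through the decreasing word v, every
   letter of which lies below b_1, and stops behind a_1 since b_1 is not below
   a_1.  Finally a' b' a_1 = a' a_1 b' by induction with the one-letter word a_1
   in place of v, giving a' a_1 b' b_1 v. *)
From mathcomp Require Import all_boot all_order all_algebra.
From mathcomp Require Import zify.
Import Order.TTheory GRing.Theory.

Set Implicit Arguments.
Unset Strict Implicit.
Unset Printing Implicit Defensive.

Local Open Scope order_scope.

Section PlacCongruence.
Context {d : Order.disp_t} {P : finPOrderType d}.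

Lemma plac_congr_refl (w : seq P) : plac_congr w w.
Proof. by exists [::]; split => // w'; rewrite big_nil subrr. Qed.

Lemma plac_congr_sym (w1 w2 : seq P) : plac_congr w1 w2 -> plac_congr w2 w1.
Proof.
move=> [s [gen_s E]].
exists [seq ((- t.1.1.1.1)%R, t.1.1.1.2, t.1.1.2, t.1.2, t.2) | t <- s]; split.
  by move=> t /mapP [t' /gen_s ? ->].
move=> w; rewrite big_map -opprB E -sumrN.
by apply: eq_bigr => t _; rewrite mulNr.
Qed.

Lemma plac_congr_trans (w1 w2 w3 : seq P) :
  plac_congr w1 w2 -> plac_congr w2 w3 -> plac_congr w1 w3.
Proof.
move=> [s1 [gen1 E1]] [s2 [gen2 E2]]; exists (s1 ++ s2); split.
  by move=> t; rewrite mem_cat => /orP [/gen1 | /gen2].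
by move=> w; rewrite big_cat /= -E1 -E2 addrA subrK.
Qed.

Lemma plac_congr_gen (w1 w2 : seq P) : plac_gen w1 w2 -> plac_congr w1 w2.
Proof.
move=> gen12; exists [:: (1%R, [::], w1, w2, [::])]; split.
  by move=> t; rewrite inE => /eqP ->.
by move=> w; rewrite big_seq1 /= mul1r !cats0.
Qed.

(* The only infix [x] of [w] with [w = l ++ x ++ r], if any; it lets the
   indicator of [w = l ++ x ++ r] factor through that of [x]. *)
Let infix_between (l r w : seq P) : seq P :=
  take (size w - size l - size r) (drop (size l) w).

Let eq_cat_infix (l r w x : seq P) :
  (w == l ++ x ++ r) =
  (w == l ++ infix_between l r w ++ r) && (infix_between l r w == x).
Proof.
have [->|neq] := eqVneq w (l ++ x ++ r).
  rewrite /infix_between drop_size_cat // !size_cat.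
  by rewrite take_size_cat ?eqxx //; lia.
apply/esym/negP => /andP [/eqP eq_w /eqP eq_x].
by rewrite -eq_x -eq_w eqxx in neq.
Qed.

Lemma plac_congr_cat (l r w1 w2 : seq P) :
  plac_congr w1 w2 -> plac_congr (l ++ w1 ++ r) (l ++ w2 ++ r).
Proof.
move=> [s [gen_s E]].
exists [seq (t.1.1.1.1, l ++ t.1.1.1.2, t.1.1.2, t.1.2, t.2 ++ r) | t <- s].
split; first by move=> t /mapP [t' /gen_s ? ->].
move=> w; rewrite big_map.
pose fits := ((w == l ++ infix_between l r w ++ r) : int).
have eq_cat_infix_int x :
    ((w == l ++ x ++ r) : int) = (fits * (infix_between l r w == x))%R.
  by rewrite /fits eq_cat_infix; case: (w == _); case: (_ == x).
have cat_assoc5 x y z : (l ++ x) ++ y ++ z ++ r = l ++ (x ++ y ++ z) ++ r.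
  by rewrite !catA.
under eq_bigr => t _ do rewrite /= !cat_assoc5 !eq_cat_infix_int -mulrBr mulrCA.
by rewrite -mulr_sumr -E !eq_cat_infix_int -mulrBr.
Qed.

End PlacCongruence.

Section Words.
Context {d : Order.disp_t} {P : finPOrderType d}.

Lemma plac_congr_swap_right (a b c : P) :
  a < b -> a < c -> ~~ (c < b) -> plac_congr [:: b; a; c] [:: b; c; a].
Proof. by move=> ab ac cb; apply: plac_congr_gen; exists a, b, c; left. Qed.

Lemma plac_congr_pull_left (x z : P) (v : seq P) :
  strict_decr (x :: v) -> ~~ (z < x) -> all (fun y => y < z) v ->
  plac_congr (x :: v ++ [:: z]) [:: x, z & v].
Proof.
elim: v x => [|y v IH] x; first by move=> *; apply: plac_congr_refl.
rewrite /strict_decr /= => /andP [yx decr_yv] zx /andP [yz below_v].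
have zy : ~~ (z < y) by rewrite lt_gtF.
have := plac_congr_cat [:: x] [::] (IH y decr_yv zy below_v).
rewrite /= !cats0 => /plac_congr_trans; apply.
exact: (plac_congr_cat [::] v (plac_congr_swap_right yx yz zx)).
Qed.

Definition desc_word (n : nat) (A : nat -> P) : seq P :=
  [seq A (n - k) | k <- iota 0 n].

Lemma desc_wordS (n : nat) (A : nat -> P) :
  desc_word n.+1 A = rcons (desc_word n (fun i => A i.+1)) (A 1%N).
Proof.
rewrite /desc_word -addn1 iotaD map_cat /= add0n cats1 addn1 subSnn.
congr rcons; apply/eq_in_map => k; rewrite mem_iota add0n => /andP [_ kn].
by rewrite subSn // ltnW.
Qed.

Lemma plac_congr_commute_step (a' b' v : seq P) (a b : P) :
  (forall w, strict_decr (a' ++ w) -> strict_decr (b' ++ w) ->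
     plac_congr (a' ++ w ++ b') (a' ++ b' ++ w)) ->
  strict_decr (rcons a' a ++ v) -> strict_decr (rcons b' a) ->
  strict_decr (b :: v) -> ~~ (b < a) ->
  plac_congr (rcons a' a ++ v ++ rcons b' b) (rcons a' a ++ rcons b' b ++ v).
Proof.
rewrite /strict_decr => commute_a'b' decr_av decr_b'a decr_bv ba.
have [decr_a'a decr_a_v] : sorted >%O (rcons a' a) /\ path >%O a v.
  by apply/andP; rewrite -sorted_cat_cons -cat_rcons.
have below_b : all (fun y => y < b) v.
  by move: decr_bv; rewrite /= (path_sortedE (rev_trans lt_trans)) => /andP [].
have commute_av : plac_congr (a' ++ (a :: v) ++ b') (a' ++ b' ++ a :: v).
  by apply: commute_a'b'; rewrite sorted_cat_cons; apply/andP.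
have commute_a : plac_congr (a' ++ [:: a] ++ b') (a' ++ b' ++ [:: a]).
  by apply: commute_a'b'; rewrite cats1.
have move_av := plac_congr_cat [::] [:: b] commute_av.
have move_b := plac_congr_pull_left decr_a_v ba below_b.
have {}move_b := plac_congr_cat (a' ++ b') [::] move_b.
have move_a := plac_congr_cat [::] (b :: v) (plac_congr_sym commute_a).
rewrite -!cats1 -!catA /= ?cats0 in move_av move_b move_a *.
exact: plac_congr_trans move_av (plac_congr_trans move_b move_a).
Qed.

Lemma plac_congr_desc_words (n : nat) (A B : nat -> P) (v : seq P) :
  strict_decr (desc_word n A ++ v) -> strict_decr (desc_word n B ++ v) ->
  (forall i, (1 <= i <= n)%N -> ~~ (B i < A i)) ->
  (forall i, (1 <= i <= n.-1)%N -> A i < B i.+1) ->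
  plac_congr (desc_word n A ++ v ++ desc_word n B)
             (desc_word n A ++ desc_word n B ++ v).
Proof.
elim: n A B v => [|n IH] A B v; first by rewrite cats0 => *; apply: plac_congr_refl.
rewrite !desc_wordS => decr_av decr_bv BA AB.
apply: plac_congr_commute_step decr_av _ _ (BA 1%N isT).
- move=> w decr_a'w decr_b'w; apply: IH => // i /andP [i_gt0 i_le].
    by apply: BA; lia.
  by apply: AB; lia.
- move: decr_bv AB; case: (n) => [|m] //; rewrite desc_wordS cat_rcons.
  move=> /cat_sorted2 [decr_b' _] AB; rewrite /strict_decr -!cats1 -catA /=.
  by rewrite sorted_cat_cons /= decr_b' andbT; apply: AB.
- by move: decr_bv; rewrite cat_rcons => /cat_sorted2 [].
Qed.

End Words.

Theorem mainTheorem14 (d : Order.disp_t) (P : finPOrderType d)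
  (n : nat) (A B : nat -> P) (v : seq P) :
  three_one_free (P := P) ->
  strict_decr ([seq A (n - k) | k <- iota 0 n] ++ v) ->
  strict_decr ([seq B (n - k) | k <- iota 0 n] ++ v) ->
  (forall i, (1 <= i <= n)%N -> ~~ (B i < A i)) ->
  (forall i, (1 <= i <= n.-1)%N -> A i < B i.+1) ->
  plac_congr ([seq A (n - k) | k <- iota 0 n] ++ v ++ [seq B (n - k) | k <- iota 0 n])
             ([seq A (n - k) | k <- iota 0 n] ++ [seq B (n - k) | k <- iota 0 n] ++ v).
Proof. by move=> _; apply: plac_congr_desc_words. Qed.
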